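(* Let $G=(V,E)$ be a control flow graph and $p,a,b\in V$ three distinct nodes such that $p$ is a predicate node with successors $s_1$ and $s_2$. Then $a,b$ are DOD on $p$ if and only if (i) $p$ has at least two successors in $A_p$, (ii) there exists an $s_1$-strip in $A_p$ that contains $a$ before $b$, and (iii) there exists an $s_2$-strip in $A_p$ that contains $b$ before $a$.
   Context: A control flow graph (CFG) is a finite directed graph $G=(V,E)$ in which every node has at most two outgoing edges; nodes with exactly two outgoing edges are predicate nodes. A path from $n_1$ is a nonempty finite or infinite sequence of nodes with each adjacent pair an edge; it is maximal if it is infinite or its last node has no successor. $V_p$ is the set of nodes occurring on all maximal paths from $p$ in $G$. For $V'\subseteq V$, a $V'$-interval from $x$ to $y$ is a finite path $n_1\ldots n_k$ in $G$ with $k\ge 2$, $n_1=x\in V'$, $n_k=y\in V'$, and $n_i\notin V'$ for $1<i<k$. $A_p$ is the directed graph with node set $V_p$ and an edge $(x,y)$ iff there is a $V_p$-interval from $x$ to $y$ in $G$. For $i\in\{1,2\}$, $V_i$ is the set of nodes $n\in V_p$ such that there is a finite path in $G$ from $s_i$ to $n$ whose nodes other than the last one all lie outside $V_p$ (possibly $n=s_i$). An $s_i$-strip is a finite path $n\ldots m$ in $A_p$ whose first node lies in $V_i$ and all of whose other nodes lie in $V_p\setminus V_i$, such that the successor of $m$ in $A_p$ is a node in $V_i$. For three distinct nodes $p,a,b$ with $p$ a predicate node with successors $s_1,s_2$, the nodes $a,b$ are DOD on $p$ if all maximal paths from $p$ contain both $a$ and $b$, all maximal paths from $s_1$ contain $a$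 before any occurrence of $b$, and all maximal paths from $s_2$ contain $b$ before any occurrence of $a$. *)

From mathcomp Require Import all_boot.
Set Implicit Arguments. Unset Strict Implicit. Unset Printing Implicit Defensive.

Section CFGDefs.
Variables (V : finType) (E : rel V).

Definition CFG : Prop := forall x : V, #|[set y | E x y]| <= 2.

Definition predicate_node (x : V) : Prop := #|[set y | E x y]| = 2.

(* A finite maximal path from x is  x :: s  with  path E x s  and a last node
   without successor; an infinite path from x is f : nat -> V with f 0 = x. *)
Definition finite_maxpath (x : V) (s : seq V) : Prop :=
  path E x s /\ (forall y, ~~ E (last x s) y).

Definition infinite_path (x : V) (f : nat -> V) : Prop :=
  f 0 = x /\ (forall i, E (f i) (f i.+1)).

Definition all_maxpaths_contain (x a : V) : Prop :=
  (forall s, finite_maxpath x s -> a \in x :: s) /\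
  (forall f, infinite_path x f -> exists i, f i = a).

Definition all_maxpaths_before (x a b : V) : Prop :=
  (forall s, finite_maxpath x s ->
     a \in x :: s /\ index a (x :: s) < index b (x :: s)) /\
  (forall f, infinite_path x f ->
     exists i, f i = a /\ forall j, j <= i -> f j <> b).

Definition Vp (p n : V) : Prop := all_maxpaths_contain p n.

(* V'-interval from x to y: the path x :: s, with s nonempty, ending in y,
   whose interior nodes (behead (belast x s)) lie outside V' *)
Definition interval (P : V -> Prop) (x y : V) : Prop :=
  P x /\ P y /\
  exists s : seq V, s <> [::] /\ path E x s /\ last x s = y /\
    (forall z, z \in behead (belast x s) -> ~ P z).

Definition Ap (p x y : V) : Prop := interval (Vp p) x y.

Definition Vi (p si n : V) : Prop :=
  Vp p n /\
  exists s : seq V, path E si s /\ last si s = n /\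
    (forall z, z \in belast si s -> ~ Vp p z).

Fixpoint Ap_path (p x : V) (r : seq V) : Prop :=
  match r with
  | [::] => True
  | y :: r' => Ap p x y /\ Ap_path p y r'
  end.

Definition strip (p si n : V) (r : seq V) : Prop :=
  Vi p si n /\ Ap_path p n r /\
  (forall z, z \in r -> Vp p z /\ ~ Vi p si z) /\
  (exists y, Ap p (last n r) y /\ Vi p si y).

(* the sequence t contains a before b (first occurrence of a precedes
   the first occurrence of b, and b occurs) *)
Definition contains_before (t : seq V) (a b : V) : Prop :=
  b \in t /\ index a t < index b t.

Definition DOD (p s1 s2 a b : V) : Prop :=
  all_maxpaths_contain p a /\ all_maxpaths_contain p b /\
  all_maxpaths_before s1 a b /\ all_maxpaths_before s2 b a.

End CFGDefs.

From mathcomp Require Import all_boot boolp.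
Set Implicit Arguments. Unset Strict Implicit. Unset Printing Implicit Defensive.

(* Suppose p has two distinct A_p-successors t1 and t2.  Every path from p can be
   re-routed through the A_p-interval leading to its last visit of t1 or t2, so
   that it avoids the other one; since all maximal paths from p meet both, p lies
   on no cycle and every node of V_p other than p is met by all maximal paths from
   any node of V_p.  Hence two A_p-predecessors of a node that both differ from p
   coincide, so an A_p-walk starting in V_i (which avoids p) is determined by its
   end.  Projecting paths of G onto V_p, "all maximal paths from s_i meet a before
   b" becomes "a precedes b on the s_i-strip through b"; and under DOD the first
   V_p-nodes reached from s_1 and from s_2 must differ, which gives (i).
   Path properties are handled through the least fixpoint [inevitable A B x]
   ("every maximal path from x meets A, and meets no B before that"), which
   classical choice shows equivalent to the formulation with maximal paths. *)

Lemma split_last (T : Type) (P : pred T) (s : seq T) : has P s ->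
  exists s1 x s2, [/\ s = s1 ++ x :: s2, P x & ~~ has P s2].
Proof.
rewrite -has_rev -[s]revK; move: (rev s) => r; rewrite revK.
case/split_find => x r1 r2 Px Nr1.
by exists (rev r2), x, (rev r1); rewrite rev_cat rev_rcons has_rev.
Qed.

Lemma nth_cons_size (T : Type) (x : T) s : nth x (x :: s) (size s) = last x s.
Proof. by rewrite -[size s]/(size (x :: s)).-1 nth_last. Qed.

Lemma before_nth (T : eqType) (x a b : T) (l : seq T) : a != b ->
  (a \in l /\ index a l < index b l) <->
  exists i, [/\ i < size l, nth x l i = a & forall j, j <= i -> nth x l j <> b].
Proof.
move=> ab; split=> [[al ab_lt] | [i [isz ia nb]]].
  exists (index a l); split; [by rewrite index_mem | exact: nth_index |].
  move=> j ji jb; have js : j < size l by apply: leq_ltn_trans ji _; rewrite index_mem.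
  have := leq_ltn_trans (index_nth x js) (leq_ltn_trans ji ab_lt).
  by rewrite jb ltnn.
split; first by rewrite -ia mem_nth.
apply: leq_ltn_trans (_ : index a l <= i) _; first by rewrite -ia index_nth.
rewrite ltnNge; apply/negP => bi.
have bl : b \in l by rewrite -index_mem (leq_ltn_trans bi isz).
by apply: (nb _ bi); rewrite nth_index.
Qed.

Lemma path_first_hit (T : Type) (e : rel T) (P : pred T) x s :
  path e x s -> has P (x :: s) ->
  exists s', [/\ path e x s', P (last x s') & ~~ has P (belast x s')].
Proof.
elim: s x => [|y s IH] x Exs hasPs; have [Px | nPx] := boolP (P x); try by exists [::].
  by move: hasPs; rewrite /= (negbTE nPx).
move: Exs hasPs => /= /andP [Exy Eys]; rewrite (negbTE nPx) => /(IH _ Eys) [s' [Eys' Pl nPs']].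
by exists (y :: s'); rewrite /= Exy Eys' (negbTE nPx).
Qed.

Lemma split_around (T : eqType) (P : pred T) (s : seq T) b : b \in s -> ~~ P b ->
  P (head b s) -> P (last b s) ->
  exists s1 n r y s2, [/\ s = s1 ++ n :: r ++ y :: s2, P n, P y, ~~ has P r & b \in r].
Proof.
move=> bs nPb; case/splitPr: bs => c1 c2 Ph Pl.
have /split_last [s1 [n [m [-> Pn nPm]]]] : has P c1.
  by case: c1 Ph {Pl} => [|z c1] /=; [rewrite (negbTE nPb) | move->].
clear Ph.
have /split_find [y m2 s2 Py nPm2] : has P c2.
  move: Pl; rewrite last_cat /=; case: c2 => [|z c2]; first by rewrite /= (negbTE nPb).
  by move=> Pl; apply/hasP; exists (last z c2); rewrite ?mem_last.
exists s1, n, (m ++ b :: m2), y, s2; split=> //.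
- by rewrite -catA /= -catA /= cat_rcons.
- by rewrite has_cat /= (negbTE nPb) (negbTE nPm) (negbTE nPm2).
- by rewrite mem_cat mem_head orbT.
Qed.

Section Inevitability.
Variables (V : finType) (E : rel V).

Inductive inevitable (A B : V -> Prop) : V -> Prop :=
| inevitable_now x : A x -> inevitable A B x
| inevitable_later x : ~ B x -> (exists y, E x y) ->
    (forall y, E x y -> inevitable A B y) -> inevitable A B x.

Local Notation meets z := (inevitable (eq^~ z) (fun=> False)).
Local Notation meets_before a b := (inevitable (eq^~ a) (eq^~ b)).

Definition maxpaths_meet_before (A B : V -> Prop) (x : V) : Prop :=
  (forall s, finite_maxpath E x s -> exists i, [/\ i < size (x :: s),
     A (nth x (x :: s) i) & forall j, j <= i -> ~ B (nth x (x :: s) j)]) /\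
  (forall f, infinite_path E x f ->
     exists i, A (f i) /\ forall j, j <= i -> ~ B (f j)).

Lemma inevitable_maxpaths A B x : (forall v, A v -> ~ B v) ->
  inevitable A B x -> maxpaths_meet_before A B x.
Proof.
move=> AnB; elim=> {x} [x Ax | x nBx [y0 Exy0] _ IH]; split.
- by move=> s _; exists 0; split=> // j; rewrite leqn0 => /eqP ->; apply: AnB.
- move=> f [f0 _]; exists 0; rewrite f0; split=> // j.
  by rewrite leqn0 => /eqP ->; rewrite f0; apply: AnB.
- move=> [|y s] [/= Exs dead]; first by move: (dead y0); rewrite Exy0.
  move/andP: Exs => [Exy Eys].
  have [i [isz Ai nB]] := (IH y Exy).1 s (conj Eys dead).
  exists i.+1; split=> //=; first by rewrite (set_nth_default y).
  case=> [|j] //= ji; rewrite (set_nth_default y); last exact: leq_ltn_trans isz.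
  exact: nB.
- move=> f [f0 Ef].
  have Ex1 : E x (f 1) by rewrite -f0; apply: Ef.
  have [i [Ai nB]] := (IH _ Ex1).2 (fun i => f i.+1) (conj erefl (fun i => Ef i.+1)).
  by exists i.+1; split=> // [[|j]] ji; [rewrite f0 | apply: nB].
Qed.

Lemma path_traject (g : V -> V) x n :
  (forall k, k < n -> E (iter k g x) (iter k.+1 g x)) -> path E x (traject g (g x) n).
Proof.
elim: n x => [|n IH] x //= En; rewrite (En 0) //=.
by apply: IH => k kn; rewrite -!iterSr; apply: En.
Qed.

Lemma escape A B x : ~ inevitable A B x ->
  (exists s, [/\ path E x s, forall v, v \in x :: s -> ~ A v &
     B (last x s) \/ forall y, ~~ E (last x s) y]) \/
  (exists f, infinite_path E x f /\ forall i, ~ A (f i)).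
Proof.
move=> nIx; pose stop v := B v \/ forall y, ~~ E v y.
have step v : ~ inevitable A B v -> ~ stop v -> exists2 y, E v y & ~ inevitable A B y.
  move=> nIv nsv; apply: contrapT => none; apply: nIv.
  apply: inevitable_later => [Bv | | y Evy]; first by apply: nsv; left.
    apply: contrapT => nex; apply: nsv; right => y.
    by apply/negP => Evy; apply: nex; exists y.
  by apply: contrapT => nIy; apply: none; exists y.
have /choice [g gP] : forall v, exists y, ~ inevitable A B v -> ~ stop v ->
                 E v y /\ ~ inevitable A B y.
  move=> v; have [nIv | Iv] := pselect (~ inevitable A B v); last by exists v.
  have [nsv | sv] := pselect (~ stop v); last by exists v.
  by have [y Evy nIy] := step v nIv nsv; exists y.
pose f i := iter i g x.
have escaping i : (forall k, k < i -> ~ stop (f k)) -> ~ inevitable A B (f i).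
  elim: i => [//|i IH] ns; have nIi := IH (fun k ki => ns k (ltnW ki)).
  exact: (gP _ nIi (ns i (ltnSn i))).2.
have edge i : (forall k, k <= i -> ~ stop (f k)) -> E (f i) (f i.+1).
  by move=> ns; apply: (gP _ (escaping i (fun k ki => ns k (ltnW ki))) (ns i (leqnn i))).1.
have noA i : (forall k, k < i -> ~ stop (f k)) -> ~ A (f i).
  by move=> ns Ai; apply: (escaping i ns); apply: inevitable_now.
have [[i0 si0] | nstop] := pselect (exists i, stop (f i)).
- have : exists i, `[< stop (f i) >] by exists i0; apply/asboolP.
  case/ex_minnP => i /asboolP si imin.
  have ns k : k < i -> ~ stop (f k).
    by move=> ki sk; have := imin k (asboolT sk); rewrite leqNgt ki.
  left; exists (traject g (g x) i); split.
  + by apply: path_traject => k ki; apply: edge => j jk; apply: ns (leq_ltn_trans jk ki).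
  + rewrite -trajectS => v /trajectP [k ki ->].
    by apply: noA => j jk; apply: ns (leq_trans jk _).
  + by rewrite last_traject.
- have ns k : ~ stop (f k) by move=> sk; apply: nstop; exists k.
  by right; exists f; split=> [|i]; [split=> // i; apply: edge | apply: noA].
Qed.

Lemma maxpath_exists x :
  (exists s, finite_maxpath E x s) \/ (exists f, infinite_path E x f).
Proof.
have nI : ~ inevitable (fun=> False) (fun=> False) x.
  by elim=> // y _ [z Ez] _ IH; apply: (IH z).
case: (escape nI) => [[s [Es _ [//|dead]]] | [f [f_inf _]]].
  by left; exists s.
by right; exists f.
Qed.

Lemma maxpath_extend x s : path E x s ->
  (exists t, finite_maxpath E x (s ++ t)) \/
  (exists f, infinite_path E x f /\ forall i, i <= size s -> f i = nth x (x :: s) i).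
Proof.
move=> Es.
case: (maxpath_exists (last x s)) => [[t [Et dead]] | [h [h0 Eh]]].
  by left; exists t; split; rewrite ?cat_path ?last_cat ?Es.
right; exists (fun i => if i <= size s then nth x (x :: s) i else h (i - size s)).
split=> [|i ->//]; split=> // i /=; case: (ltngtP i (size s)) => iS.
- by move/pathP: Es => /(_ x i iS).
- by rewrite subSn ?Eh // ltnW.
- by rewrite iS subSn // subnn nth_cons_size -h0 Eh.
Qed.

Lemma maxpaths_inevitable A B x : maxpaths_meet_before A B x -> inevitable A B x.
Proof.
move=> [Hfin Hinf]; apply: contrapT => /escape [[s [Es nA [Bl | dead]]] | [f [f_inf nA]]].
- have bad (g : nat -> V) i : (forall k, k <= size s -> g k = nth x (x :: s) k) ->
      A (g i) -> (forall j, j <= i -> ~ B (g j)) -> False.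
    move=> gE Ai nB; case: (leqP i (size s)) => iS.
      by apply: (nA (g i)); rewrite // gE // mem_nth.
    by apply: (nB (size s) (ltnW iS)); rewrite gE // nth_cons_size.
  case: (maxpath_extend Es) => [[t /Hfin [i [_ Ai nB]]] | [f [/Hinf [i [Ai nB]] fE]]].
    apply: (bad (nth x (x :: s ++ t)) i) => // k ks.
    by rewrite -cat_cons nth_cat /= ltnS ks.
  exact: (bad f i).
- by have [i [isz Ai _]] := Hfin _ (conj Es dead); apply: (nA _ (mem_nth x isz)).
- by have [i [Ai _]] := Hinf _ f_inf; apply: (nA i).
Qed.

Lemma inevitable_succ A B x : inevitable A B x -> ~ A x ->
  ~ B x /\ forall y, E x y -> inevitable A B y.
Proof. by case. Qed.

Lemma inevitable_path A B x s : inevitable A B x -> path E x s ->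
  (forall v, v \in belast x s -> ~ A v) -> inevitable A B (last x s).
Proof.
elim: s x => [|y s IH] x Ix //= /andP [Exy Eys] nA.
apply: IH => [|//|v vs]; last by apply: nA; rewrite inE vs orbT.
by apply: (inevitable_succ Ix (nA x (mem_head _ _))).2.
Qed.

Lemma inevitable_reach A B x : inevitable A B x -> exists s, path E x s /\ A (last x s).
Proof.
elim=> {x} [x Ax | x _ [y Exy] _ IH]; first by exists [::].
by have [s [Eys As]] := IH y Exy; exists (y :: s); rewrite /= Exy Eys.
Qed.

Lemma inevitable_cycle A B x c : inevitable A B x -> ~ A x -> path E x c ->
  c != [::] -> last x c = x -> (forall v, v \in c -> ~ A v) -> False.
Proof.
move=> Ix; elim: Ix c => {x} [//|x _ _ _ IH] [//|y c] nAx /= /andP [Exy Eyc] _ lc nA.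
apply: (IH y Exy (rcons c y)); first by apply: nA; rewrite mem_head.
- by rewrite rcons_path Eyc lc.
- by rewrite -size_eq0 size_rcons.
- by rewrite last_rcons.
move=> v; rewrite mem_rcons inE => /orP [/eqP -> | vc]; apply: nA; first exact: mem_head.
by rewrite inE vc orbT.
Qed.

Lemma inevitable_trans A A' B x : inevitable A B x ->
  (forall v, A v -> inevitable A' B v) -> inevitable A' B x.
Proof. by move=> Ix h; elim: Ix => {x} [x /h | x nB ex _ IH] //; apply: inevitable_later. Qed.

Lemma inevitable_before A B x : inevitable A (fun=> False) x ->
  (forall s, path E x s -> B (last x s) -> exists2 v, v \in x :: s & A v) ->
  inevitable A B x.
Proof.
elim=> {x} [x Ax | x _ ex _ IH] h; first exact: inevitable_now.
have [Ax | nAx] := pselect (A x); first exact: inevitable_now.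
apply: inevitable_later => // [Bx | y Exy].
  by have [v] := h [::] erefl Bx; rewrite inE => /eqP ->.
apply: IH => // s Eys Bl; have [v] : exists2 v, v \in x :: y :: s & A v.
  by apply: h; rewrite //= Exy Eys.
by rewrite inE => /orP [/eqP -> // | vys]; exists v.
Qed.

Lemma Vp_meets p n : Vp E p n -> meets n p.
Proof.
move=> [Hfin Hinf]; apply: maxpaths_inevitable; split.
  move=> s /Hfin ns; exists (index n (p :: s)).
  by split=> [|| ? ? []]; [rewrite index_mem | exact: nth_index].
by move=> f /Hinf [i fi]; exists i; split=> // ? ? [].
Qed.

Lemma all_maxpaths_beforeE {x a b : V} : a != b ->
  all_maxpaths_before E x a b <-> meets_before a b x.
Proof.
move=> ab; split=> [[Hfin Hinf] | Iab].
  apply: maxpaths_inevitable; split=> [s /Hfin /(before_nth x _ ab) // | f /Hinf [i [fi nb]]].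
  by exists i; split=> // j /nb.
have disj v : v = a -> v <> b by move=> -> ba; move: ab; rewrite ba eqxx.
have [Hfin Hinf] := inevitable_maxpaths disj Iab.
by split=> [s /Hfin | f /Hinf]; [rewrite (before_nth x _ ab) | ].
Qed.

Lemma meets_before_antisym a b x : a <> b -> meets_before a b x -> meets_before b a x -> False.
Proof.
move=> ab Iab; elim: Iab => {x} [x -> | x nb [y Exy] _ IH] Iba.
  by apply: (inevitable_succ Iba ab).1.
exact: (IH y Exy ((inevitable_succ Iba nb).2 y Exy)).
Qed.

End Inevitability.

Section ProjectionOnAp.
Variables (V : finType) (E : rel V) (p : V).
Local Notation Vp := (Vp E p).
Local Notation Ap := (Ap E p).
Local Notation Ap_path := (Ap_path E p).
Local Notation inVp := (fun v => `[< Vp v >]).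

Lemma Vp_p : Vp p.
Proof. by split=> [s _ | f [f0 _]]; [exact: mem_head | exists 0]. Qed.

Lemma Ap_Vp x y : Ap x y -> Vp x /\ Vp y.
Proof. by case=> Vx [Vy _]. Qed.

Lemma Ap_interval x y : Ap x y -> exists s, [/\ s != [::], path E x s, last x s = y &
  forall z, Vp z -> z <> y -> z \notin s].
Proof.
case=> _ [_ [s [s0 [Exs [<- interior]]]]]; exists s; split=> //; first by apply/eqP.
case/lastP: s s0 Exs interior => [//|s z] _ _; rewrite belast_rcons last_rcons /= => interior.
move=> w Vw wz; rewrite mem_rcons inE negb_or; apply/andP; split; first exact/eqP.
by apply/negP => /interior.
Qed.

Lemma Ap_path_cat x l1 l2 :
  Ap_path x (l1 ++ l2) <-> Ap_path x l1 /\ Ap_path (last x l1) l2.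
Proof.
elim: l1 x => [|y l1 IH] x /=; first by split=> // [[]].
by rewrite IH; split=> [[? [? ?]] | [[? ?] ?]].
Qed.

Lemma Ap_path_Vp x l : Vp x -> Ap_path x l -> {in x :: l, forall z, Vp z}.
Proof.
elim: l x => [|y l IH] x Vx /=; first by move=> _ z; rewrite inE => /eqP ->.
move=> [Axy Ayl] z; rewrite inE => /orP [/eqP -> // | zl].
exact: (IH y (Ap_Vp Axy).2 Ayl).
Qed.

Lemma Ap_path_walk x l : Ap_path x l -> exists s, path E x s /\ {subset l <= s}.
Proof.
elim: l x => [|y l IH] x /=; first by exists [::].
move=> [/Ap_interval [s [s0 Exs lsy _]] /IH [t [Eyt lt]]].
exists (s ++ t); split; first by rewrite cat_path Exs lsy.
move=> v; rewrite inE mem_cat => /orP [/eqP -> | /lt ->]; last by rewrite orbT.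
by rewrite -lsy; case: s s0 {Exs lsy} => //= z s _; rewrite mem_last.
Qed.

Lemma inevitable_Ap A B x y : inevitable E A B x -> ~ A x -> (forall v, A v -> Vp v) ->
  Ap x y -> inevitable E A B y.
Proof.
move=> Ix nAx AVp [_ [_ [s [s0 [Exs [<- interior]]]]]]; apply: inevitable_path Exs _ => // v.
by case: s s0 interior => //= z s _ interior; rewrite inE => /orP [/eqP -> | /interior nv /AVp].
Qed.

Lemma inevitable_Vi A B si y : inevitable E A B si -> (forall v, A v -> Vp v) ->
  Vi E p si y -> inevitable E A B y.
Proof.
by move=> Ix AVp [_ [s [Es [<- outside]]]]; apply: inevitable_path Es _ => // v /outside nv /AVp.
Qed.

Lemma Vi_Ap si y : E p si -> Vi E p si y -> Ap p y.
Proof.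
move=> Epsi [Vy [s [Es [ls outside]]]]; split; first exact: Vp_p.
by split=> //; exists (si :: s); rewrite /= Epsi Es.
Qed.

Lemma Ap_path_filter_from x pi s : Vp x -> path E x (pi ++ s) ->
  {in pi, forall z, ~ Vp z} -> Vp (last x (pi ++ s)) ->
  Ap_path x (filter inVp s) /\ last x (filter inVp s) = last x (pi ++ s).
Proof.
elim: s x pi => [|y s IH] x pi Vx /=.
  rewrite cats0; case: pi => [//|z pi] _ out Vl.
  by have := out _ (mem_last z pi).
rewrite cat_path /= => /and3P [Epi Ey Es] out Vl; rewrite last_cat /= in Vl *.
have [Vy | nVy] := pselect (Vp y).
  have nil_out : {in [::], forall z, ~ Vp z} by [].
  rewrite (asboolT Vy) /=; have [Ays ->] := IH y [::] Vy Es nil_out Vl.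
  do 4 split=> //.
  exists (rcons pi y); split; first by case: pi {Epi out Ey}.
  by rewrite rcons_path Epi Ey last_rcons belast_rcons.
rewrite (asboolF nVy).
have := IH x (rcons pi y) Vx; rewrite cat_rcons last_cat /=; apply=> //.
  by rewrite cat_path Epi /= Ey.
by move=> z; rewrite mem_rcons inE => /orP [/eqP -> | /out].
Qed.

Lemma Ap_path_filter x s : Vp x -> path E x s -> Vp (last x s) ->
  Ap_path x (filter inVp s) /\ last x (filter inVp s) = last x s.
Proof. by move=> Vx Es Vl; apply: (Ap_path_filter_from (pi := [::])). Qed.

Lemma Vi_filter x s : path E x s -> Vp (last x s) ->
  exists y l, [/\ filter inVp (x :: s) = y :: l, Vi E p x y, Ap_path y l & last y l = last x s].
Proof.
elim: s x => [|z s IH] x.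
  by move=> _ Vx; exists x, [::]; rewrite /= (asboolT Vx); do 2 split=> //; exists [::].
move=> /andP [Exz Es] Vl.
have [Vx | nVx] := pselect (Vp x).
  have Exzs : path E x (z :: s) by rewrite /= Exz.
  have [Axs lxs] := Ap_path_filter Vx Exzs Vl.
  exists x, (filter inVp (z :: s)); rewrite [filter _ _]/= (asboolT Vx); split=> //.
  by split=> //; exists [::].
have [y [l [fzs [Vy [t [Ezt [lt out]]]] Ayl ll]]] := IH z Es Vl.
exists y, l; rewrite -cat1s filter_cat fzs /= (asboolF nVx); split=> //.
split=> //; exists (z :: t); rewrite /= Exz Ezt; split=> //; split=> // v.
by rewrite inE => /orP [/eqP -> | /out].
Qed.

End ProjectionOnAp.

Section TwoSuccessors.
Variables (V : finType) (E : rel V) (p t1 t2 : V).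
Hypotheses (t12 : t1 <> t2) (At1 : Ap E p p t1) (At2 : Ap E p p t2).
Local Notation Vp := (Vp E p).
Local Notation Ap := (Ap E p).
Local Notation Ap_path := (Ap_path E p).
Local Notation inVp := (fun v => `[< Vp v >]).
Local Notation meets z := (inevitable E (eq^~ z) (fun=> False)).

Lemma Ap_from_p_neq_p u w : Ap p u -> Vp w -> w <> u -> u <> p.
Proof.
move=> /Ap_interval [s [s0 Eps lsu avoid]] Vw wu up; rewrite up in lsu avoid wu.
have nws : w \notin s by apply: avoid.
apply: (inevitable_cycle (Vp_meets Vw) _ Eps s0 lsu) => [pw | v vs vw].
  exact: wu (esym pw).
by move: nws; rewrite -vw vs.
Qed.

Lemma succ_meets k : k = t1 \/ k = t2 -> meets k p /\ k <> p.
Proof.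
have ne21 : t2 <> t1 by move=> e; apply: t12.
case=> ->; split; first exact: Vp_meets (Ap_Vp At1).2.
- exact: Ap_from_p_neq_p At1 (Ap_Vp At2).2 ne21.
- exact: Vp_meets (Ap_Vp At2).2.
- exact: Ap_from_p_neq_p At2 (Ap_Vp At1).2 t12.
Qed.

Lemma bypass_succ r : path E p r -> r != [::] -> exists k r',
  [/\ k = t1 \/ k = t2, r' != [::], path E p r', last p r' = last p r & k \notin r'].
Proof.
pose P v := (v == t1) || (v == t2).
move=> Er r0; have [/split_last [c1 [v [c2 [rE Pv nPc2]]]] | nPr] := boolP (has P r); last first.
  exists t1, r; split=> //; first by left.
  by apply: contra nPr => t1r; apply/hasP; exists t1; rewrite /P ?eqxx.
pose k := if v == t1 then t2 else t1.
have kt : k = t1 \/ k = t2 by rewrite /k; case: eqP; [right | left].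
have kv : k <> v.
  by rewrite /k; case: eqP => [-> e | ne e]; [exact: t12 (esym e) | exact: ne (esym e)].
have Vk : Vp k by case: kt => ->; [exact: (Ap_Vp At1).2 | exact: (Ap_Vp At2).2].
have Av : Ap p v by case/orP: Pv => /eqP ->.
have [s [s0 Eps lsv avoid]] := Ap_interval Av.
have Evc2 : path E v c2 by move: Er; rewrite rE cat_path => /andP [_ /= /andP []].
exists k, (s ++ c2); split=> //.
- by case: s s0 {Eps lsv avoid}.
- by rewrite cat_path Eps lsv.
- by rewrite rE !last_cat lsv.
rewrite mem_cat negb_or avoid //=; apply: contra nPc2 => kc2; apply/hasP; exists k => //.
by rewrite /P; case: kt => ->; rewrite eqxx ?orbT.
Qed.

Lemma reachable_meets_succ r : path E p r -> meets t1 (last p r) \/ meets t2 (last p r).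
Proof.
case: r => [_ | z r Er]; first by left; exact: (succ_meets (or_introl erefl)).1.
have [k [r' [kt _ Er' <- kr']]] := bypass_succ Er isT.
have [Ik kp] := succ_meets kt.
have Ir : meets k (last p r').
  apply: inevitable_path Ik Er' _ => v /mem_belast; rewrite inE => /orP [/eqP -> | vr'] vk.
    exact: kp.
  by move: kr'; rewrite -vk vr'.
by case: kt Ir => ->; [left | right].
Qed.

Lemma no_cycle_at_p c : path E p c -> c != [::] -> last p c <> p.
Proof.
move=> Ec c0 lc; have [k [c' [kt c'0 Ec' lc' kc']]] := bypass_succ Ec c0.
have [Ik kp] := succ_meets kt.
apply: (inevitable_cycle Ik _ Ec' c'0 (etrans lc' lc)) => [pk | v vc' vk].
  exact: kp (esym pk).
by move: kc'; rewrite -vk vc'.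
Qed.

Lemma p_notin_path c : path E p c -> p \notin c.
Proof.
move=> Ec; apply/negP => pc; case/splitPr: pc Ec => c1 c2.
rewrite cat_path /= => /and3P [Ec1 Ep _].
apply: (@no_cycle_at_p (rcons c1 p)); rewrite ?rcons_path ?Ec1 ?last_rcons //.
by rewrite -size_eq0 size_rcons.
Qed.

Lemma Vi_Ap_path_neq_p si n l : E p si -> Vi E p si n -> Ap_path n l ->
  {in n :: l, forall z, z <> p}.
Proof.
move=> Epsi [_ [t [Et [ltn _]]]] /Ap_path_walk [w [Ew lw]] z zl zp.
have Epw : path E p (si :: t ++ w) by rewrite /= Epsi cat_path Et ltn Ew.
have : z \in si :: t ++ w.
  move: zl; rewrite inE -cat_cons mem_cat => /orP [/eqP -> | /lw ->]; last by rewrite orbT.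
  by rewrite -ltn mem_last.
by rewrite zp (negbTE (p_notin_path Epw)).
Qed.

Lemma Vp_meets_Vp x z : Vp x -> Vp z -> z <> p -> meets z x.
Proof.
move=> Vx Vz zp; have [r [Er <-]] := inevitable_reach (Vp_meets Vx).
have meets_z k : Ap p k -> meets z k.
  by apply: inevitable_Ap (Vp_meets Vz) _ _ => [pz | v ->]; [exact: zp (esym pz) |].
by case: (reachable_meets_succ Er) => Ik; apply: inevitable_trans Ik _ => v ->; exact: meets_z.
Qed.

Lemma Ap_return_cycle y y' u d : Ap y u -> Vp y' -> y' <> p -> y' <> y ->
  path E u d -> last u d = y -> y' \notin u :: d -> False.
Proof.
move=> Ayu Vy' y'p y'y Ed ld; rewrite inE negb_or => /andP [y'u y'd].
have [s [s0 Eys lsu avoid]] := Ap_interval Ayu.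
have Vu := (Ap_Vp Ayu).2.
apply: (inevitable_cycle (Vp_meets_Vp Vu Vy' y'p) (c := d ++ s)) => [uy' | | | | v].
- by move: y'u; rewrite uy' eqxx.
- by rewrite cat_path Ed ld.
- by rewrite -size_eq0 size_cat addn_eq0 negb_and !size_eq0 s0 orbT.
- by rewrite last_cat ld.
rewrite mem_cat => /orP [vd | vs] vy'; first by move: y'd; rewrite -vy' vd.
by move: vs; rewrite vy' (negbTE (avoid _ Vy' (elimN eqP y'u))).
Qed.

Lemma Ap_pred_unique x x' u : Ap x u -> Ap x' u -> x <> p -> x' <> p -> x = x'.
Proof.
move=> Ax Ax' xp x'p; apply: contrapT => xx'.
pose P v := (v == x) || (v == x').
have Vu := (Ap_Vp Ax).2.
have [d [Ed ld]] := inevitable_reach (Vp_meets_Vp Vu (Ap_Vp Ax).1 xp).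
have Pud : has P (u :: d) by apply/hasP; exists x; rewrite /P ?eqxx // -ld mem_last.
have [d' [Ed' Pw nPd']] := path_first_hit Ed Pud.
have other y' : P y' -> y' <> last u d' -> y' \notin u :: d'.
  move=> Py' y'w; rewrite lastI mem_rcons inE negb_or; apply/andP; split; first exact/eqP.
  by apply: contra nPd' => y'd; apply/hasP; exists y'.
case/orP: Pw => /eqP wE.
- apply: (Ap_return_cycle (y := x) (y' := x') _ (Ap_Vp Ax').1 x'p _ Ed' wE) => //.
    by move=> e; apply: xx'.
  by apply: other; rewrite /P ?eqxx ?orbT // wE => e; apply: xx'.
- apply: (Ap_return_cycle (y := x') (y' := x) _ (Ap_Vp Ax).1 xp xx' Ed' wE) => //.
  by apply: other; rewrite /P ?eqxx // wE.
Qed.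

Lemma Vi_Ap_path_suffix si n l y l' : E p si -> Vi E p si n -> Ap_path n l ->
  {in l, forall z, ~ Vi E p si z} -> Vi E p si y -> Ap_path y l' ->
  last n l = last y l' -> suffix (n :: l) (y :: l').
Proof.
move=> Epsi Vn; elim/last_ind: l l' => [|m e IH] l' Anl nVl Vy Ayl' ll.
  by rewrite /= in ll; rewrite [y :: l']lastI -ll -cats1 suffix_suffix.
case/lastP: l' Ayl' ll => [|m' e'] Ayl' ll.
  by rewrite /= last_rcons in ll; move: (nVl e); rewrite mem_rcons mem_head ll => /(_ isT).
rewrite !last_rcons in ll; subst e'.
move: Anl Ayl'; rewrite -!cats1 !Ap_path_cat => -[Anm [Ae _]] [Aym' [Ae' _]].
have mm' : last n m = last y m'.
  apply: Ap_pred_unique Ae Ae' _ _.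
    by apply: (Vi_Ap_path_neq_p Epsi Vn Anm); rewrite mem_last.
  by apply: (Vi_Ap_path_neq_p Epsi Vy Aym'); rewrite mem_last.
rewrite !cats1 -!rcons_cons suffix_rcons eqxx /=.
by apply: IH => // z zm; apply: nVl; rewrite mem_rcons inE zm orbT.
Qed.

Lemma Ap_cycle_through y b : Vp y -> Vp b -> y <> p -> b <> p -> y <> b ->
  exists L, [/\ Ap_path y L, b \in L & last y L = y].
Proof.
move=> Vy Vb yp bp yb.
have [d1 [Ed1 ld1]] := inevitable_reach (Vp_meets_Vp Vy Vb bp).
have [d2 [Ed2 ld2]] := inevitable_reach (Vp_meets_Vp Vb Vy yp).
have [A1 l1] := Ap_path_filter Vy Ed1 (eq_ind_r Vp Vb ld1).
have [A2 l2] := Ap_path_filter Vb Ed2 (eq_ind_r Vp Vy ld2).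
rewrite {}ld1 in l1; rewrite {}ld2 in l2.
exists (filter inVp d1 ++ filter inVp d2); split.
- by apply/Ap_path_cat; rewrite l1.
- rewrite mem_cat -l1; case: (filter _ d1) l1 => [/yb // | z f _].
  by rewrite /= mem_last.
- by rewrite last_cat l1 l2.
Qed.

End TwoSuccessors.

Section Strips.
Variables (V : finType) (E : rel V) (p t1 t2 : V).
Hypotheses (t12 : t1 <> t2) (At1 : Ap E p p t1) (At2 : Ap E p p t2).
Local Notation Vp := (Vp E p).
Local Notation Ap := (Ap E p).
Local Notation Ap_path := (Ap_path E p).
Local Notation meets_before a b := (inevitable E (eq^~ a) (eq^~ b)).

Lemma meets_before_self a b : a <> b -> ~ meets_before a b b.
Proof. by move=> ab /inevitable_succ /(_ (fun e => ab (esym e))) []. Qed.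

Lemma contains_before_Ap_path a b n r : a <> b -> Vp a -> meets_before a b n ->
  Ap_path n r -> b \in n :: r -> contains_before (n :: r) a b.
Proof.
move=> ab Va; elim: r n => [|y r IH] n Inr Anr bnr.
  by move: bnr Inr; rewrite inE => /eqP <- /(meets_before_self ab).
split=> //; have [na | na] := pselect (n = a).
  by rewrite /= na eqxx ifN //; apply/eqP => e; apply: ab.
have [nb _] := inevitable_succ Inr na.
move: Anr bnr => [Any Ayr]; rewrite inE => /orP [/eqP bn | byr]; first by case: nb.
have Iy : meets_before a b y by apply: inevitable_Ap Inr na _ Any => v ->.
have [_ ilt] := IH y Iy Ayr byr.
have idx x : n <> x -> index x (n :: y :: r) = (index x (y :: r)).+1.
  by move=> nx; rewrite /= ifN //; apply/eqP.
by rewrite !idx.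
Qed.

Lemma Ap_path_split x l s1 n r : Ap_path x l -> x :: l = s1 ++ n :: r -> Ap_path n r.
Proof.
case: s1 => [Axl [<- <-] // | z s1 Axl [_ lE]].
by move: Axl; rewrite lE Ap_path_cat => -[_ [_]].
Qed.

Lemma strip_in_Ap_cycle si y L b : Vi E p si y -> Ap_path y L -> last y L = y ->
  b \in L -> ~ Vi E p si b -> exists n r, strip E p si n r /\ b \in r.
Proof.
pose P v := `[< Vi E p si v >].
move=> Vy AyL lL bL nVb.
have byL : b \in y :: L by rewrite inE bL orbT.
have nPb : ~~ P b by exact/asboolP.
have Py : P (head b (y :: L)) by exact/asboolP.
have Pl : P (last b (y :: L)) by rewrite /= lL; exact/asboolP.
have [s1 [n [r [y' [s2 [LE /asboolP Vn /asboolP Vy' nPr br]]]]]] := split_around byL nPb Py Pl.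
move: (Ap_path_split AyL LE); rewrite Ap_path_cat => -[Anr [Ary' _]].
exists n, r; split=> //; split=> //; split=> //; split; last by exists y'.
move=> z zr; split; first by apply: (Ap_path_Vp Vn.1 Anr); rewrite inE zr orbT.
by move=> Vz; move/hasP: nPr; apply; exists z => //; exact/asboolP.
Qed.

Lemma Vi_meets_before si a b : Vp a -> meets_before a b si ->
  exists y, Vi E p si y /\ meets_before a b y.
Proof.
move=> Va Isi; have [d [Ed ld]] := inevitable_reach Isi.
have [y [l [_ Vy _ _]]] := Vi_filter Ed (eq_ind_r Vp Va ld).
by exists y; split=> //; apply: inevitable_Vi Isi _ Vy => v ->.
Qed.

Lemma strip_of_meets_before si a b : E p si -> a <> b -> Vp a -> Vp b -> b <> p ->
  meets_before a b si -> exists n r, strip E p si n r /\ contains_before (n :: r) a b.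
Proof.
move=> Epsi ab Va Vb bp Isi.
have Vi_meets n : Vi E p si n -> meets_before a b n.
  by move=> Vn; apply: inevitable_Vi Isi _ Vn => v ->.
have [y [Vy Iy]] := Vi_meets_before Va Isi.
have yp : y <> p by apply: (Vi_Ap_path_neq_p t12 At1 At2 Epsi Vy (l := [::])); rewrite ?mem_head.
have yb : y <> b by move=> e; move: Iy; rewrite e; exact: meets_before_self.
have [L [AyL bL lL]] := Ap_cycle_through t12 At1 At2 Vy.1 Vb yp bp yb.
have nVb : ~ Vi E p si b by move/Vi_meets; exact: meets_before_self.
have [n [r [st br]]] := strip_in_Ap_cycle Vy AyL lL bL nVb.
exists n, r; split=> //; case: st => [Vn [Anr _]].
by apply: contains_before_Ap_path (Vi_meets n Vn) Anr _; rewrite // inE br orbT.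
Qed.

Lemma meets_before_of_strip si a b n r : E p si -> a <> b -> a <> p ->
  strip E p si n r -> contains_before (n :: r) a b -> [/\ Vp a, Vp b & meets_before a b si].
Proof.
move=> Epsi ab ap [Vn [Anr [rV _]]] [bnr ilt].
have Vnr := Ap_path_Vp Vn.1 Anr.
have anr : a \in n :: r by rewrite -index_mem (leq_trans ilt) // index_size.
have [Va Vb] := (Vnr a anr, Vnr b bnr).
split=> //; apply: inevitable_before => [|d Ed ld].
  exact: (inevitable_succ (Vp_meets Va) (fun e => ap (esym e))).2 si Epsi.
have [y [l [fE Vy Ayl lyl]]] := Vi_filter Ed (eq_ind_r Vp Vb ld).
pose k := index b (n :: r).
have bE : last n (take k r) = b.
  rewrite -[last n _]/(last n (take k.+1 (n :: r))) (take_nth n) ?index_mem //.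
  by rewrite last_rcons nth_index.
have ak : a \in take k.+1 (n :: r) by rewrite in_take // ltnW.
have Ank : Ap_path n (take k r).
  by have [+ _] := Ap_path_cat E p n (take k r) (drop k r); rewrite cat_take_drop => /(_ Anr) [].
have nVk : {in take k r, forall z, ~ Vi E p si z} by move=> z /mem_take /rV [].
have lE : last n (take k r) = last y l by rewrite bE lyl ld.
have suf := Vi_Ap_path_suffix t12 At1 At2 Epsi Vn Ank nVk Vy Ayl lE.
exists a => //; have : a \in y :: l by apply: mem_infix (suffixW suf) _ ak.
by rewrite -fE mem_filter => /andP [].
Qed.

End Strips.

Theorem theorem4p13 (V : finType) (E : rel V) (p s1 s2 a b : V) :
  CFG E -> predicate_node E p -> E p s1 -> E p s2 -> s1 != s2 ->
  p != a -> p != b -> a != b ->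
  (DOD E p s1 s2 a b <->
   [/\ (exists y1 y2, y1 <> y2 /\ Ap E p p y1 /\ Ap E p p y2),
       (exists n r, strip E p s1 n r /\ contains_before (n :: r) a b) &
       (exists n r, strip E p s2 n r /\ contains_before (n :: r) b a)]).
Proof.
move=> _ _ Eps1 Eps2 _ pa pb ab.
have [ap bp] : a <> p /\ b <> p by split=> e; [move: pa | move: pb]; rewrite e eqxx.
have ba : b != a by rewrite eq_sym.
have [ab' ba'] : a <> b /\ b <> a by split; apply/eqP.
split=> [[Va [Vb [/(all_maxpaths_beforeE E ab) I1 /(all_maxpaths_beforeE E ba) I2]]]
        | [[y1 [y2 [y12 [A1 A2]]]] [n1 [r1 [st1 cb1]]] [n2 [r2 [st2 cb2]]]]].
  have [y1 [V1 I1y]] := Vi_meets_before Va I1.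
  have [y2 [V2 I2y]] := Vi_meets_before Vb I2.
  have y12 : y1 <> y2 by move=> e; rewrite e in I1y; exact: meets_before_antisym ab' I1y I2y.
  have [A1 A2] := (Vi_Ap Eps1 V1, Vi_Ap Eps2 V2).
  split; first by exists y1, y2.
    exact: (strip_of_meets_before y12 A1 A2 Eps1 ab' Va Vb bp I1).
  exact: (strip_of_meets_before y12 A1 A2 Eps2 ba' Vb Va ap I2).
have [Va Vb I1] := meets_before_of_strip y12 A1 A2 Eps1 ab' ap st1 cb1.
have [_ _ I2] := meets_before_of_strip y12 A1 A2 Eps2 ba' bp st2 cb2.
by split=> //; split=> //; split; apply/all_maxpaths_beforeE.
Qed.
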